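(* Let $\alpha,\beta,\gamma,\delta\in\mathbb{C}$ be parameters for which all gamma functions and hypergeometric functions below are well-defined, and for $z\ne0$ let $$f(\alpha,\beta,\gamma,\delta;z)=\sum_{\nu=0}^{\infty}\frac{z^{-\nu}\Gamma(\alpha+\gamma+\nu)}{\nu!\,\Gamma(\beta+\nu)}\,E\left(\begin{matrix}\alpha+1,&\beta+\nu\\ \delta,&\beta+1+\nu\end{matrix};z\right).$$ Then $$f(\alpha,\beta,\gamma,\delta;z)=\frac{\Gamma(\alpha+1)\Gamma(\alpha+\gamma)}{\Gamma(\beta+1)\Gamma(\delta)}+O(z^{-1})\quad\text{as }|z|\to\infty.$$
   Context: For complex parameters $a_1,\dots,a_p$, $b_1,\dots,b_q$ with $p\le q$ and $z\in\mathbb{C}\setminus\{0\}$, the MacRobert $E$-function is $$E\left(\begin{matrix}a_1,\dots,a_p\\ b_1,\dots,b_q\end{matrix};z\right)=\frac{\prod_{j=1}^p\Gamma(a_j)}{\prod_{j=1}^q\Gamma(b_j)}\,{}_pF_q\left(\begin{matrix}a_1,\dots,a_p\\ b_1,\dots,b_q\end{matrix};-\frac1z\right),$$ where ${}_pF_q$ is the generalized hypergeometric function. *)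

From Stdlib Require Import Reals List Factorial.
From Coquelicot Require Import Coquelicot.
Import ListNotations.

Open Scope C_scope.

Definition Cexp (z : C) : C :=
  (exp (fst z) * cos (snd z), exp (fst z) * sin (snd z))%R.

Definition Cnpow (n : nat) (z : C) : C := Cexp (z * RtoC (ln (INR n))).

(* Sum of a complex series (componentwise real Series; equals the sum
   whenever the series converges). *)
Definition CSeries (a : nat -> C) : C :=
  (Series (fun n => fst (a n)), Series (fun n => snd (a n))).

(* Limit of a complex sequence (componentwise; equals the limit when the
   sequence converges). *)
Definition CLim_seq (u : nat -> C) : C :=
  (real (Lim_seq (fun n => fst (u n))), real (Lim_seq (fun n => snd (u n)))).

Fixpoint poch (a : C) (k : nat) : C :=
  match k with
  | O => 1
  | S k' => poch a k' * (a + RtoC (INR k'))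
  end.

(* Gauss/Euler limit formula for the complex Gamma function:
   Gamma(z) = lim_{n->oo} n! n^z / (z (z+1) ... (z+n)),
   valid (convergent) for all z not in {0,-1,-2,...}. *)
Definition Gamma_seq (z : C) (n : nat) : C :=
  RtoC (INR (Factorial.fact n)) * Cnpow n z / poch z (S n).

Definition CGamma (z : C) : C := CLim_seq (Gamma_seq z).

Definition not_nonpos_int (z : C) : Prop := forall k : nat, z <> RtoC (- INR k).

Definition Cprod (l : list C) : C := fold_right Cmult 1 l.

Definition hypergeo (as_ bs : list C) (x : C) : C :=
  CSeries (fun k =>
    Cprod (map (fun a => poch a k) as_) / Cprod (map (fun b => poch b k) bs)
    * x ^ k / RtoC (INR (Factorial.fact k))).

Definition MacRobertE (as_ bs : list C) (z : C) : C :=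
  Cprod (map CGamma as_) / Cprod (map CGamma bs) * hypergeo as_ bs (- / z).

Definition f_term (al be ga de z : C) (nu : nat) : C :=
  (/ z) ^ nu * CGamma (al + ga + RtoC (INR nu))
  / (RtoC (INR (Factorial.fact nu)) * CGamma (be + RtoC (INR nu)))
  * MacRobertE [al + 1; be + RtoC (INR nu)] [de; be + 1 + RtoC (INR nu)] z.

Definition f_fun (al be ga de z : C) : C := CSeries (f_term al be ga de z).

From Stdlib Require Import Reals Lra Lia List Factorial.
From Coquelicot Require Import Coquelicot.
Import ListNotations.
Open Scope R_scope.

(* Euler's limit Γ(w) = lim n! n^w / (w)_(n+1) is an infinite product whose factors are
   1 + O(n^-2), so it converges whenever w is not a pole; comparing the products for w
   and w + 1 gives Γ(w + 1) = w Γ(w), hence Γ(w + k) = (w)_k Γ(w).  With this the ν-th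
   summand of f is
     Γ(α+1)Γ(α+γ)/(Γ(β+1)Γ(δ)) · (α+γ)_ν z^-ν / (ν! (β+1)_ν) · 2F2(α+1, β+ν; δ, β+1+ν; -1/z).
   Since |a + m| <= B |b + m| uniformly in m when b is not a pole, the k-th term of every
   2F2 is at most (B1 B2 / |z|)^k and the ν-th weight at most (B3/|z|)^ν.  For large |z| all
   the series are dominated by geometric series of ratio <= 1/2, and every summand except
   the one with ν = k = 0 contributes O(1/|z|). *)

Lemma Rabs_fst_le_Cmod (u : C) : Rabs (fst u) <= Cmod u.
Proof. eapply Rle_trans; [apply Rmax_l | apply Rmax_Cmod]. Qed.

Lemma Rabs_snd_le_Cmod (u : C) : Rabs (snd u) <= Cmod u.
Proof. eapply Rle_trans; [apply Rmax_r | apply Rmax_Cmod]. Qed.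

Lemma Cmod_le_Rabs_fst_snd (u : C) : Cmod u <= Rabs (fst u) + Rabs (snd u).
Proof.
  unfold Cmod. rewrite <- (sqrt_pow2 (Rabs (fst u) + Rabs (snd u)))
    by (pose proof (Rabs_pos (fst u)); pose proof (Rabs_pos (snd u)); lra).
  apply sqrt_le_1_alt.
  pose proof (Rsqr_abs (fst u)); pose proof (Rsqr_abs (snd u)). unfold Rsqr in *.
  pose proof (Rabs_pos (fst u)); pose proof (Rabs_pos (snd u)). nra.
Qed.

Lemma Cmod_sub_le_Cmod_add (w a : C) : Cmod a - Cmod w <= Cmod (w + a).
Proof.
  pose proof (Cmod_triangle (w + a) (- w)) as H. rewrite Cmod_opp in H.
  replace (w + a + - w)%C with a in H by ring. lra.
Qed.

Lemma Cmod_add_nat_ge (w : C) (n : nat) : INR n - Cmod w <= Cmod (w + RtoC (INR n)).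
Proof.
  pose proof (Cmod_sub_le_Cmod_add w (RtoC (INR n))) as H.
  rewrite Cmod_R, Rabs_pos_eq in H by apply pos_INR. exact H.
Qed.

Lemma cos_sub_1_bound a : Rabs a <= 1/2 -> Rabs (cos a - 1) <= a ^ 2.
Proof.
  intros Ha. apply Rabs_le_between in Ha.
  destruct (pre_cos_bound a 0 ltac:(lra) ltac:(lra)) as [Hlow _].
  replace (cos_approx a _) with (1 - a ^ 2 / 2) in Hlow
    by (unfold cos_approx, cos_term; simpl; field).
  pose proof (COS_bound a). apply Rabs_le. nra.
Qed.

Lemma sin_sub_id_bound a : Rabs a <= 1/2 -> Rabs (sin a - a) <= a ^ 2.
Proof.
  revert a. enough (Hpos : forall a, 0 <= a <= 1/2 -> Rabs (sin a - a) <= a ^ 2).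
  { intros a Ha. apply Rabs_le_between in Ha. destruct (Rle_dec 0 a).
    - apply Hpos. lra.
    - replace (sin a - a) with (- (sin (- a) - - a)) by (rewrite sin_neg; ring).
      rewrite Rabs_Ropp. replace (a ^ 2) with ((- a) ^ 2) by ring. apply Hpos. lra. }
  intros a Ha. destruct (pre_sin_bound a 0 ltac:(lra) ltac:(lra)) as [Hlow Hup].
  replace (sin_approx a _) with (a - a ^ 3 / 6) in Hlow
    by (unfold sin_approx, sin_term; simpl; field).
  replace (sin_approx a _) with (a - a ^ 3 / 6 + a ^ 5 / 120) in Hup
    by (unfold sin_approx, sin_term; simpl; field).
  assert (0 <= a ^ 3 <= a ^ 2) by (simpl; split; nra).
  assert (0 <= a ^ 5 <= a ^ 2) by (simpl; split; nra).
  apply Rabs_le. lra.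
Qed.

Lemma Rabs_sin_le a : Rabs a <= 1/2 -> Rabs (sin a) <= 2 * Rabs a.
Proof.
  intros Ha. pose proof (sin_sub_id_bound a Ha) as Hs.
  pose proof (Rabs_triang (sin a - a) a) as Ht. replace (sin a - a + a) with (sin a) in Ht by ring.
  pose proof (Rsqr_abs a). unfold Rsqr in *. pose proof (Rabs_pos a). nra.
Qed.

Lemma exp_sub_1_sub_id_bound a : Rabs a <= 1/2 -> 0 <= exp a - 1 - a <= 2 * a ^ 2.
Proof.
  intros Ha. apply Rabs_le_between in Ha. pose proof (exp_ineq1_le a).
  pose proof (exp_ineq1_le (- a)). pose proof (exp_pos a).
  assert (exp a * exp (- a) = 1) by (rewrite <- exp_plus, Rplus_opp_r; apply exp_0).
  nra.
Qed.

Lemma Cexp_add a b : Cexp (a + b) = (Cexp a * Cexp b)%C.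
Proof.
  unfold Cexp; destruct a as [a1 a2], b as [b1 b2]; simpl.
  rewrite exp_plus, cos_plus, sin_plus. apply injective_projections; simpl; ring.
Qed.

Lemma Cexp_RtoC y : Cexp (RtoC y) = RtoC (exp y).
Proof. unfold Cexp; simpl. rewrite cos_0, sin_0. apply injective_projections; simpl; ring. Qed.

Lemma exp_cos_sub_bound a b : Rabs a <= 1/2 -> Rabs b <= 1/2 ->
  Rabs (exp a * cos b - 1 - a) <= 2 * a ^ 2 + 2 * b ^ 2.
Proof.
  intros Ha Hb. pose proof (exp_sub_1_sub_id_bound a Ha) as He.
  pose proof (cos_sub_1_bound b Hb) as Hc.
  assert (exp a <= 2) by (apply Rabs_le_between in Ha; simpl in He; nra).
  replace (exp a * cos b - 1 - a) with ((exp a - 1 - a) + exp a * (cos b - 1)) by ring.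
  eapply Rle_trans; [apply Rabs_triang|]. rewrite Rabs_mult, Rabs_pos_eq by lra.
  rewrite (Rabs_pos_eq (exp a)) by (apply Rlt_le, exp_pos).
  pose proof (Rabs_pos (cos b - 1)). pose proof (exp_pos a). nra.
Qed.

Lemma exp_sin_sub_bound a b : Rabs a <= 1/2 -> Rabs b <= 1/2 ->
  Rabs (exp a * sin b - b) <= 4 * Rabs a * Rabs b + b ^ 2.
Proof.
  intros Ha Hb. pose proof (exp_sub_1_sub_id_bound a Ha) as He.
  assert (Rabs (exp a - 1) <= 2 * Rabs a).
  { pose proof (Rsqr_abs a). unfold Rsqr in *. pose proof (Rabs_pos a).
    apply Rabs_le. apply Rabs_le_between in Ha. destruct (Rle_dec 0 a).
    - rewrite Rabs_pos_eq in * by lra. simpl in He. nra.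
    - rewrite Rabs_left in * by lra. simpl in He. nra. }
  replace (exp a * sin b - b) with ((exp a - 1) * sin b + (sin b - b)) by ring.
  eapply Rle_trans; [apply Rabs_triang|]. rewrite Rabs_mult.
  pose proof (sin_sub_id_bound b Hb). pose proof (Rabs_sin_le b Hb).
  pose proof (Rabs_pos (exp a - 1)). pose proof (Rabs_pos (sin b)). nra.
Qed.

Lemma Cexp_sub_1_sub_id_bound (u : C) :
  Cmod u <= 1/2 -> Cmod (Cexp u - 1 - u) <= 5 * Cmod u ^ 2.
Proof.
  intros Hu. pose proof (Rabs_fst_le_Cmod u). pose proof (Rabs_snd_le_Cmod u).
  rewrite Cmod2_alt. destruct u as [a b]; unfold Re, Im; simpl in *.
  eapply Rle_trans; [apply Cmod_le_Rabs_fst_snd|]. unfold Cexp; simpl.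
  replace (exp a * cos b + - (1) + - a) with (exp a * cos b - 1 - a) by ring.
  replace (exp a * sin b + - 0 + - b) with (exp a * sin b - b) by ring.
  pose proof (exp_cos_sub_bound a b ltac:(lra) ltac:(lra)).
  pose proof (exp_sin_sub_bound a b ltac:(lra) ltac:(lra)).
  pose proof (Rsqr_abs a); pose proof (Rsqr_abs b). unfold Rsqr in *.
  pose proof (pow2_ge_0 (Rabs a - Rabs b)). simpl in *. nra.
Qed.

(** * Limits and series of complex sequences *)

Definition Clim (u : nat -> C) (L : C) : Prop :=
  is_lim_seq (fun n => fst (u n)) (fst L) /\ is_lim_seq (fun n => snd (u n)) (snd L).

Lemma CLim_seq_Clim u L : Clim u L -> CLim_seq u = L.
Proof.
  intros [H1 H2]. unfold CLim_seq.
  rewrite (is_lim_seq_unique _ _ H1), (is_lim_seq_unique _ _ H2). now destruct L.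
Qed.

Lemma Clim_ext_loc u v L :
  (exists N, forall n, (N <= n)%nat -> u n = v n) -> Clim u L -> Clim v L.
Proof.
  intros [N HN] [H1 H2].
  split; eapply is_lim_seq_ext_loc; eauto; exists N; intros n Hn; now rewrite HN.
Qed.

Lemma Clim_const (c : C) : Clim (fun _ => c) c.
Proof. split; apply is_lim_seq_const. Qed.

Lemma Clim_mult u v L M : Clim u L -> Clim v M -> Clim (fun n => u n * v n)%C (L * M)%C.
Proof.
  intros [Hu1 Hu2] [Hv1 Hv2]. split; simpl.
  - apply is_lim_seq_minus'; apply is_lim_seq_mult'; auto.
  - apply is_lim_seq_plus'; apply is_lim_seq_mult'; auto.
Qed.

Lemma is_lim_seq_inv_add_INR a : 0 < a -> is_lim_seq (fun n => / (INR n + a)) 0.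
Proof.
  intros Ha. change (Finite 0) with (Rbar_inv p_infty).
  apply is_lim_seq_inv; [|discriminate].
  eapply is_lim_seq_plus; [apply is_lim_seq_INR | apply is_lim_seq_const | reflexivity].
Qed.

Lemma is_lim_seq_of_Rabs_le u l N B :
  (forall n, (N <= n)%nat -> Rabs (u n - l) <= B / (INR n + 1)) -> is_lim_seq u l.
Proof.
  intros Hu.
  assert (HB : is_lim_seq (fun n => B / (INR n + 1)) 0).
  { replace (Finite 0) with (Finite (B * 0)) by (f_equal; ring).
    apply (is_lim_seq_scal_l _ B 0). apply is_lim_seq_inv_add_INR; lra. }
  apply (is_lim_seq_le_le_loc (fun n => l - B / (INR n + 1)) _ (fun n => l + B / (INR n + 1))).
  - exists N. intros n Hn. apply Rabs_le_between'. auto.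
  - replace (Finite l) with (Finite (l - 0)) by (f_equal; ring).
    apply is_lim_seq_minus'; auto using is_lim_seq_const.
  - replace (Finite l) with (Finite (l + 0)) by (f_equal; ring).
    apply is_lim_seq_plus'; auto using is_lim_seq_const.
Qed.

Lemma Clim_of_Cmod_le u L N B :
  (forall n, (N <= n)%nat -> Cmod (u n - L) <= B / (INR n + 1)) -> Clim u L.
Proof.
  intros Hu. split; apply (is_lim_seq_of_Rabs_le _ _ N B); intros n Hn;
    eapply Rle_trans; [| apply (Hu n Hn) | | apply (Hu n Hn)].
  - apply (Rabs_fst_le_Cmod (u n - L)).
  - apply (Rabs_snd_le_Cmod (u n - L)).
Qed.

Lemma Clim_INR_div_add_INR c :
  Clim (fun n => RtoC (INR n) / (c + RtoC (INR n)))%C 1.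
Proof.
  destruct (nfloor_ex (2 * Cmod c + 1)) as [N [_ HN]]; [pose proof (Cmod_ge_0 c); lra|].
  apply (Clim_of_Cmod_le _ _ (S N) (2 * Cmod c)). intros n Hn.
  apply le_INR in Hn. rewrite S_INR in Hn.
  pose proof (Cmod_add_nat_ge c n) as Hlow.
  assert (Hc : (c + RtoC (INR n))%C <> 0%C)
    by (intros E; rewrite E, Cmod_0 in Hlow; pose proof (Cmod_ge_0 c); lra).
  replace (RtoC (INR n) / (c + RtoC (INR n)) - 1)%C with (- c / (c + RtoC (INR n)))%C
    by (field; auto).
  rewrite Cmod_div, Cmod_opp by auto. pose proof (Cmod_ge_0 c).
  apply Rle_div_l; [lra|].
  replace (2 * Cmod c / (INR n + 1) * Cmod (c + RtoC (INR n)))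
    with (Cmod c * (2 * Cmod (c + RtoC (INR n)) / (INR n + 1))) by (field; lra).
  rewrite <- (Rmult_1_r (Cmod c)) at 1. apply Rmult_le_compat_l; auto.
  apply Rle_div_r; lra.
Qed.

Lemma is_lim_seq_telescope (p : nat -> R) :
  ex_series (fun n => p (S n) - p n) ->
  is_lim_seq p (p O + Series (fun n => p (S n) - p n)).
Proof.
  intros Hs. apply is_lim_seq_incr_1.
  apply (is_lim_seq_ext (fun n => p O + sum_n (fun k => p (S k) - p k) n)).
  - intros n. induction n as [|n IH].
    + rewrite sum_O. simpl. ring.
    + rewrite sum_Sn, <- IH. change plus with Rplus. simpl. ring.
  - apply is_lim_seq_plus'; [apply is_lim_seq_const | apply (Series_correct _ Hs)].
Qed.

Lemma Clim_of_summable_increments (P : nat -> C) (e : nat -> R) :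
  (forall n, Cmod (P (S n) - P n) <= e n) -> ex_series e -> exists L, Clim P L.
Proof.
  intros HP He.
  assert (Hcomp : forall f : C -> R, (forall u, Rabs (f u) <= Cmod u) ->
            (forall u v, f (u - v)%C = f u - f v) ->
            ex_series (fun n => f (P (S n)) - f (P n))).
  { intros f Hf Hlin. apply (ex_series_le (V := R_CompleteNormedModule) _ e); auto.
    intros n. rewrite <- Hlin. eapply Rle_trans; [apply Hf | apply HP]. }
  pose proof (Hcomp fst Rabs_fst_le_Cmod ltac:(intros; simpl; ring)) as H1.
  pose proof (Hcomp snd Rabs_snd_le_Cmod ltac:(intros; simpl; ring)) as H2.
  eexists (_, _). split; apply is_lim_seq_telescope; eauto.
Qed.

Lemma Cmod_le_exp_Cmod_sub_1 (r : C) : Cmod r <= exp (Cmod (r - 1)).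
Proof.
  pose proof (Cmod_triangle (r - 1) 1) as H. replace (r - 1 + 1)%C with r in H by ring.
  rewrite Cmod_1 in H. pose proof (exp_ineq1_le (Cmod (r - 1))). lra.
Qed.

Lemma Cmod_summable_product_le (P r : nat -> C) :
  (forall n, P (S n) = (P n * r n)%C) -> ex_series (fun n => Cmod (r n - 1)) ->
  forall n, Cmod (P n) <= Cmod (P O) * exp (Series (fun n => Cmod (r n - 1))).
Proof.
  intros HP Hs. set (s := fun n => Cmod (r n - 1)).
  assert (Hsum : forall n, sum_n s n <= Series s).
  { apply is_lim_seq_incr_compare; [apply (Series_correct _ Hs)|].
    intros n. rewrite sum_Sn. rewrite <- (Rplus_0_r (sum_n s n)) at 1.
    apply Rplus_le_compat_l, Cmod_ge_0. }
  assert (HPS : forall n, Cmod (P (S n)) <= Cmod (P O) * exp (sum_n s n)).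
  { induction n as [|n IH].
    - rewrite HP, Cmod_mult, sum_O. apply Rmult_le_compat_l; [apply Cmod_ge_0|].
      apply Cmod_le_exp_Cmod_sub_1.
    - rewrite HP, Cmod_mult, sum_Sn. change plus with Rplus. rewrite exp_plus, <- Rmult_assoc.
      apply Rmult_le_compat; auto using Cmod_ge_0, Cmod_le_exp_Cmod_sub_1. }
  assert (0 <= Series s) by (eapply Rle_trans; [|apply (Hsum O)]; rewrite sum_O; apply Cmod_ge_0).
  pose proof (Cmod_ge_0 (P O)).
  intros [|n].
  - rewrite <- (Rmult_1_r (Cmod (P O))) at 1. apply Rmult_le_compat_l; auto.
    pose proof (exp_ineq1_le (Series s)). lra.
  - eapply Rle_trans; [apply HPS|]. apply Rmult_le_compat_l; auto.
    destruct (Rle_lt_or_eq_dec _ _ (Hsum n)) as [Hlt | ->]; [|lra].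
    left; apply exp_increasing; auto.
Qed.

Lemma Clim_of_summable_product (P r : nat -> C) :
  (forall n, P (S n) = (P n * r n)%C) -> ex_series (fun n => Cmod (r n - 1)) ->
  exists L, Clim P L.
Proof.
  intros HP Hs. pose proof (Cmod_summable_product_le P r HP Hs) as HM.
  set (M := Cmod (P O) * exp (Series (fun n => Cmod (r n - 1)))) in HM.
  apply (Clim_of_summable_increments P (fun n => M * Cmod (r n - 1))).
  - intros n. rewrite HP. replace (P n * r n - P n)%C with (P n * (r n - 1))%C by ring.
    rewrite Cmod_mult. apply Rmult_le_compat_r; [apply Cmod_ge_0 | auto].
  - apply (ex_series_scal_l (V := R_NormedModule)). exact Hs.
Qed.

Lemma ex_series_inv_succ_mul_succ_succ : ex_series (fun k => / ((INR k + 1) * (INR k + 2))).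
Proof.
  exists 1. change (is_lim_seq (sum_n (fun k => / ((INR k + 1) * (INR k + 2)))) 1).
  apply (is_lim_seq_ext (fun n => 1 - / (INR n + 2))).
  - intros n. induction n as [|n IH].
    + rewrite sum_O. simpl. field.
    + rewrite sum_Sn, <- IH. change plus with Rplus. rewrite S_INR.
      pose proof (pos_INR n). field. lra.
  - replace (Finite 1) with (Finite (1 - 0)) by (f_equal; ring).
    apply is_lim_seq_minus'; [apply is_lim_seq_const | apply is_lim_seq_inv_add_INR; lra].
Qed.

Lemma Series_geom_tail_bound (b : nat -> R) M q : 0 <= M -> 0 <= q <= 1/2 ->
  (forall n, Rabs (b (S n)) <= M * q ^ S n) ->
  ex_series b /\ Rabs (Series b - b O) <= 2 * M * q.
Proof.
  intros HM Hq Hb.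
  assert (Hgeom : ex_series (fun n => M * q * q ^ n)).
  { apply (ex_series_scal_l (V := R_NormedModule)), ex_series_geom. rewrite Rabs_pos_eq; lra. }
  assert (Hdom : forall n, Rabs (b (S n)) <= M * q * q ^ n)
    by (intros n; rewrite Rmult_assoc; apply Hb).
  assert (Habs : ex_series (fun n => Rabs (b (S n)))).
  { apply (ex_series_le (V := R_CompleteNormedModule) _ (fun n => M * q * q ^ n)); auto.
    intros n. change (Rabs (Rabs (b (S n))) <= M * q * q ^ n). now rewrite Rabs_Rabsolu. }
  assert (Htail : ex_series (fun n => b (S n))) by now apply ex_series_Rabs.
  assert (Hb' : ex_series b) by now apply ex_series_incr_1.
  split; auto.
  rewrite (Series_incr_1 b Hb'). replace (b O + Series (fun k => b (S k)) - b O)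
    with (Series (fun k => b (S k))) by ring.
  eapply Rle_trans; [apply Series_Rabs; auto|].
  eapply Rle_trans; [apply (Series_le _ _ (fun n => conj (Rabs_pos _) (Hdom n)) Hgeom)|].
  rewrite Series_scal_l, Series_geom by (rewrite Rabs_pos_eq; lra).
  apply Rle_div_l; [lra|]. assert (0 <= M * q) by nra. nra.
Qed.

Lemma CSeries_geom_tail_bound (a : nat -> C) M q : 0 <= M -> 0 <= q <= 1/2 ->
  (forall n, Cmod (a (S n)) <= M * q ^ S n) ->
  ex_series a /\ Cmod (CSeries a - a O) <= 4 * M * q.
Proof.
  intros HM Hq Ha.
  destruct (Series_geom_tail_bound (fun n => fst (a n)) M q) as [_ H1]; auto.
  { intros n. eapply Rle_trans; [apply Rabs_fst_le_Cmod | apply Ha]. }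
  destruct (Series_geom_tail_bound (fun n => snd (a n)) M q) as [_ H2]; auto.
  { intros n. eapply Rle_trans; [apply Rabs_snd_le_Cmod | apply Ha]. }
  split.
  - apply ex_series_incr_1.
    apply (ex_series_le (V := C_CompleteNormedModule) _ (fun n => M * q * q ^ n)).
    + intros n. change (Cmod (a (S n)) <= M * q * q ^ n). rewrite Rmult_assoc. apply Ha.
    + apply (ex_series_scal_l (V := R_NormedModule)), ex_series_geom. rewrite Rabs_pos_eq; lra.
  - eapply Rle_trans; [apply Cmod_le_Rabs_fst_snd|]. simpl.
    fold (Series (fun n => fst (a n)) - fst (a O)) (Series (fun n => snd (a n)) - snd (a O)).
    lra.
Qed.

(** * Pochhammer symbols *)

Lemma not_nonpos_int_add_nat w k : not_nonpos_int w -> not_nonpos_int (w + RtoC (INR k)).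
Proof.
  intros Hw j E. apply (Hw (j + k)%nat). rewrite plus_INR.
  destruct w as [a b]. injection E as E1 E2. apply injective_projections; simpl in *; lra.
Qed.

Lemma not_nonpos_int_add_1 w : not_nonpos_int w -> not_nonpos_int (w + 1).
Proof. exact (fun Hw => not_nonpos_int_add_nat w 1 Hw). Qed.

Lemma not_nonpos_int_add_nat_neq_0 w k : not_nonpos_int w -> (w + RtoC (INR k))%C <> 0%C.
Proof.
  intros Hw E. apply (not_nonpos_int_add_nat w k Hw 0%nat).
  rewrite E. apply injective_projections; simpl; lra.
Qed.

Lemma not_nonpos_int_neq_0 w : not_nonpos_int w -> w <> 0%C.
Proof.
  intros Hw E. apply (Hw 0%nat). rewrite E. apply injective_projections; simpl; lra.
Qed.

Lemma poch_neq_0 w k : not_nonpos_int w -> poch w k <> 0%C.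
Proof.
  intros Hw. induction k as [|k IH]; simpl.
  - intros E. injection E. lra.
  - apply Cmult_neq_0; auto using not_nonpos_int_add_nat_neq_0.
Qed.

Lemma poch_succ_shift w k : poch w (S k) = (w * poch (w + 1) k)%C.
Proof.
  induction k as [|k IH].
  - apply injective_projections; simpl; ring.
  - change (poch w (S (S k))) with (poch w (S k) * (w + RtoC (INR (S k))))%C.
    rewrite IH, S_INR, RtoC_plus. simpl. ring.
Qed.

Lemma RtoC_INR_fact_neq_0 k : RtoC (INR (fact k)) <> 0%C.
Proof. intros E. apply (INR_fact_neq_0 k). now injection E. Qed.

Definition shift_ratio_le (a b : C) (B : R) : Prop :=
  forall m : nat, Cmod (a + RtoC (INR m)) <= B * Cmod (b + RtoC (INR m)).

Lemma Cmod_add_nat_bounded_below b :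
  not_nonpos_int b -> exists d, 0 < d /\ forall m, d <= Cmod (b + RtoC (INR m)).
Proof.
  intros Hb. destruct (nfloor_ex (Cmod b + 1)) as [N [_ HN]]; [pose proof (Cmod_ge_0 b); lra|].
  assert (Hinit : forall K, exists d,
            0 < d /\ forall m, (m < K)%nat -> d <= Cmod (b + RtoC (INR m))).
  { induction K as [|K [d [Hd Hm]]].
    - exists 1. split; [lra | intros; lia].
    - exists (Rmin d (Cmod (b + RtoC (INR K)))). split.
      + apply Rmin_pos; auto. apply Cmod_gt_0, not_nonpos_int_add_nat_neq_0, Hb.
      + intros m Hm'. destruct (Nat.eq_dec m K) as [->|Hne]; [apply Rmin_r|].
        eapply Rle_trans; [apply Rmin_l | apply Hm; lia]. }
  destruct (Hinit (S N)) as [d [Hd Hm]]. exists (Rmin d 1). split; [apply Rmin_pos; lra|].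
  intros m. destruct (Nat.lt_ge_cases m (S N)) as [Hlt|Hge].
  - eapply Rle_trans; [apply Rmin_l | auto].
  - eapply Rle_trans; [apply Rmin_r|]. pose proof (Cmod_add_nat_ge b m).
    apply le_INR in Hge. rewrite S_INR in Hge. lra.
Qed.

Lemma shift_ratio_le_exists a b : not_nonpos_int b -> exists B, 1 <= B /\ shift_ratio_le a b B.
Proof.
  intros Hb. destruct (Cmod_add_nat_bounded_below b Hb) as [d [Hd Hm]].
  pose proof (Cmod_ge_0 (a - b)).
  exists (1 + Cmod (a - b) / d). split.
  - assert (0 <= Cmod (a - b) / d) by (apply Rdiv_le_0_compat; lra). lra.
  - intros m. specialize (Hm m).
    replace (a + RtoC (INR m))%C with ((b + RtoC (INR m)) + (a - b))%C by ring.
    eapply Rle_trans; [apply Cmod_triangle|].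
    assert (Cmod (a - b) <= Cmod (a - b) / d * Cmod (b + RtoC (INR m))).
    { replace (Cmod (a - b) / d * Cmod (b + RtoC (INR m)))
        with (Cmod (a - b) * (Cmod (b + RtoC (INR m)) / d)) by (field; lra).
      rewrite <- (Rmult_1_r (Cmod (a - b))) at 1. apply Rmult_le_compat_l; auto.
      apply Rle_div_r; lra. }
    lra.
Qed.

Lemma shift_ratio_le_shift a b B k :
  shift_ratio_le a b B -> shift_ratio_le (a + RtoC (INR k)) (b + RtoC (INR k)) B.
Proof.
  intros H m. specialize (H (k + m)%nat). rewrite plus_INR, RtoC_plus, !Cplus_assoc in H. exact H.
Qed.

Lemma Cmod_poch_le a b B : 0 <= B -> shift_ratio_le a b B ->
  forall k, Cmod (poch a k) <= B ^ k * Cmod (poch b k).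
Proof.
  intros HB Hab k. induction k as [|k IH]; simpl; [lra|].
  rewrite !Cmod_mult.
  replace (B * B ^ k * (Cmod (poch b k) * Cmod (b + RtoC (INR k))))
    with ((B ^ k * Cmod (poch b k)) * (B * Cmod (b + RtoC (INR k)))) by ring.
  apply Rmult_le_compat; auto using Cmod_ge_0.
Qed.

(** * The Gamma function *)

Definition ln_succ_diff (n : nat) : R := ln (INR (S n)) - ln (INR n).

Definition Gamma_ratio (w : C) (n : nat) : C :=
  (RtoC (INR (S n)) * Cexp (w * RtoC (ln_succ_diff n)) / (w + RtoC (INR (S n))))%C.

Lemma Gamma_seq_succ w n :
  not_nonpos_int w -> Gamma_seq w (S n) = (Gamma_seq w n * Gamma_ratio w n)%C.
Proof.
  intros Hw. unfold Gamma_seq, Gamma_ratio, Cnpow, ln_succ_diff.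
  replace (w * RtoC (ln (INR (S n))))%C
    with (w * RtoC (ln (INR n)) + w * RtoC (ln (INR (S n)) - ln (INR n)))%C
    by (rewrite RtoC_minus; ring).
  rewrite Cexp_add. change (fact (S n)) with (S n * fact n)%nat.
  rewrite mult_INR, RtoC_mult.
  change (poch w (S (S n))) with (poch w (S n) * (w + RtoC (INR (S n))))%C.
  field. auto using poch_neq_0, not_nonpos_int_add_nat_neq_0.
Qed.

Lemma ln_succ_diff_bounds n : (1 <= n)%nat -> 1 / (INR n + 1) <= ln_succ_diff n <= 1 / INR n.
Proof.
  intros Hn. apply (le_INR 1) in Hn. simpl in Hn.
  unfold ln_succ_diff. rewrite S_INR, <- ln_div by lra.
  pose proof (exp_ineq1_le (ln ((INR n + 1) / INR n))) as Hup.
  pose proof (exp_ineq1_le (ln (INR n / (INR n + 1)))) as Hlow.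
  rewrite exp_ln in Hup, Hlow by (apply Rdiv_lt_0_compat; lra).
  rewrite ln_div in Hlow by lra. rewrite ln_div in Hup |- * by lra.
  replace ((INR n + 1) / INR n) with (1 + 1 / INR n) in Hup by (field; lra).
  replace (INR n / (INR n + 1)) with (1 - 1 / (INR n + 1)) in Hlow by (field; lra).
  lra.
Qed.

Lemma Gamma_ratio_sub_1_eq w n : not_nonpos_int w ->
  let x := INR n in let u := (w * RtoC (ln_succ_diff n))%C in
  (Gamma_ratio w n - 1)%C
  = ((RtoC (x + 1) * (Cexp u - 1 - u) + w * RtoC ((x + 1) * ln_succ_diff n - 1))
     / (w + RtoC (x + 1)))%C.
Proof.
  intros Hw x u. pose proof (not_nonpos_int_add_nat_neq_0 w (S n) Hw) as HD.
  unfold Gamma_ratio, x, u. rewrite S_INR in *. rewrite RtoC_minus, RtoC_mult.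
  field. exact HD.
Qed.

Lemma Gamma_ratio_sub_1_bound w n :
  not_nonpos_int w -> (1 <= n)%nat -> 2 * Cmod w + 1 <= INR n ->
  Cmod (Gamma_ratio w n - 1) <= (20 * Cmod w ^ 2 + 2 * Cmod w) / (INR n * (INR n + 1)).
Proof.
  intros Hw Hn Hx. pose proof (not_nonpos_int_add_nat_neq_0 w (S n) Hw) as HD.
  pose proof (ln_succ_diff_bounds n Hn) as Ht. rewrite (Gamma_ratio_sub_1_eq w n Hw).
  rewrite S_INR in HD. apply (le_INR 1) in Hn. simpl in Hn.
  set (t := ln_succ_diff n) in *. set (x := INR n) in *. set (c := Cmod w) in *.
  set (u := (w * RtoC t)%C). assert (Hc : 0 <= c) by apply Cmod_ge_0.
  assert (Hu : Cmod u <= c / x).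
  { unfold u. rewrite Cmod_mult, Cmod_R, Rabs_pos_eq.
    - unfold Rdiv. apply Rmult_le_compat_l; [lra|]. rewrite <- (Rmult_1_l (/ x)). lra.
    - eapply Rle_trans; [|apply Ht]. apply Rlt_le, Rdiv_lt_0_compat; lra. }
  assert (HE : Cmod (Cexp u - 1 - u) <= 5 * (c / x) ^ 2).
  { assert (c / x <= 1/2) by (apply Rle_div_l; lra).
    eapply Rle_trans; [apply Cexp_sub_1_sub_id_bound; lra|].
    apply Rmult_le_compat_l; [lra|]. apply pow_incr. split; [apply Cmod_ge_0 | auto]. }
  assert (Hts : 0 <= (x + 1) * t - 1 <= 1 / x).
  { replace (1 / x) with ((x + 1) * (1 / x) - 1) by (field; lra).
    replace 0 with ((x + 1) * (1 / (x + 1)) - 1) by (field; lra). split; nra. }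
  assert (HDl : (x + 1) / 2 <= Cmod (w + RtoC (x + 1))).
  { pose proof (Cmod_sub_le_Cmod_add w (RtoC (x + 1))) as H.
    fold c in H. rewrite Cmod_R, Rabs_pos_eq in H; lra. }
  rewrite Cmod_div by auto. apply Rle_div_l; [lra|].
  eapply Rle_trans; [apply Cmod_triangle|]. rewrite !Cmod_mult, !Cmod_R, !Rabs_pos_eq by lra.
  apply Rle_trans with ((x + 1) * (5 * (c / x) ^ 2) + c * (1 / x));
    [apply Rplus_le_compat; apply Rmult_le_compat_l; lra|].
  apply Rle_trans with ((20 * c ^ 2 + 2 * c) / (x * (x + 1)) * ((x + 1) / 2));
    [|apply Rmult_le_compat_l; [apply Rdiv_le_0_compat; nra | auto]].
  replace ((20 * c ^ 2 + 2 * c) / (x * (x + 1)) * ((x + 1) / 2))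
    with (10 * c ^ 2 / x + c / x) by (field; lra).
  replace ((x + 1) * (5 * (c / x) ^ 2) + c * (1 / x))
    with (5 * c ^ 2 / x + 5 * c ^ 2 / x * (1 / x) + c / x) by (field; lra).
  assert (0 <= 5 * c ^ 2 / x) by (apply Rdiv_le_0_compat; nra).
  assert (1 / x <= 1) by (apply Rle_div_l; lra). nra.
Qed.

Lemma Gamma_ratio_summable w : not_nonpos_int w -> ex_series (fun n => Cmod (Gamma_ratio w n - 1)).
Proof.
  intros Hw. destruct (nfloor_ex (2 * Cmod w + 1)) as [N [_ HN]]; [pose proof (Cmod_ge_0 w); lra|].
  set (C0 := 20 * Cmod w ^ 2 + 2 * Cmod w).
  assert (HC0 : 0 <= C0) by (unfold C0; pose proof (Cmod_ge_0 w); nra).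
  apply (ex_series_incr_n _ (S N)).
  apply (ex_series_le (V := R_CompleteNormedModule) _
           (fun k => C0 * / ((INR k + 1) * (INR k + 2)))).
  2: apply (ex_series_scal_l (V := R_NormedModule)), ex_series_inv_succ_mul_succ_succ.
  intros k. change (norm _) with (Rabs (Cmod (Gamma_ratio w (S N + k) - 1))).
  rewrite Rabs_pos_eq by apply Cmod_ge_0.
  assert (Hk : INR k + 1 <= INR (S N + k) /\ 2 * Cmod w + 1 <= INR (S N + k)).
  { rewrite plus_INR, S_INR. pose proof (pos_INR N). pose proof (pos_INR k). lra. }
  eapply Rle_trans; [apply Gamma_ratio_sub_1_bound; auto; [lia | tauto]|].
  apply Rmult_le_compat_l; auto. pose proof (pos_INR k).
  apply Rinv_le_contravar; [nra|]. apply Rmult_le_compat; lra.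
Qed.

Lemma Gamma_seq_Clim w : not_nonpos_int w -> Clim (Gamma_seq w) (CGamma w).
Proof.
  intros Hw. destruct (Clim_of_summable_product (Gamma_seq w) (Gamma_ratio w)) as [L HL].
  - intros n. now apply Gamma_seq_succ.
  - now apply Gamma_ratio_summable.
  - unfold CGamma. now rewrite (CLim_seq_Clim _ _ HL).
Qed.

(* False at [n = 0], where [Cnpow 0] is junk since [ln 0 = 0]. *)
Lemma Gamma_seq_add_1 w n : not_nonpos_int w -> (1 <= n)%nat ->
  Gamma_seq (w + 1) n = (w * Gamma_seq w n * (RtoC (INR n) / (w + 1 + RtoC (INR n))))%C.
Proof.
  intros Hw Hn. apply (le_INR 1) in Hn. simpl in Hn.
  unfold Gamma_seq, Cnpow.
  change (poch (w + 1) (S n)) with (poch (w + 1) n * (w + 1 + RtoC (INR n)))%C.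
  rewrite (poch_succ_shift w n).
  replace ((w + 1) * RtoC (ln (INR n)))%C with (w * RtoC (ln (INR n)) + RtoC (ln (INR n)))%C
    by ring.
  rewrite Cexp_add, Cexp_RtoC, exp_ln by lra.
  pose proof (not_nonpos_int_add_1 w Hw) as Hw1.
  field. repeat split; auto using not_nonpos_int_neq_0, poch_neq_0.
  exact (not_nonpos_int_add_nat_neq_0 _ n Hw1).
Qed.

Lemma CGamma_add_1 w : not_nonpos_int w -> CGamma (w + 1) = (w * CGamma w)%C.
Proof.
  intros Hw. unfold CGamma at 1. apply CLim_seq_Clim.
  replace (w * CGamma w)%C with (w * CGamma w * 1)%C by ring.
  apply (Clim_ext_loc (fun n => w * Gamma_seq w n * (RtoC (INR n) / (w + 1 + RtoC (INR n))))%C).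
  - exists 1%nat. intros n Hn. now rewrite Gamma_seq_add_1.
  - apply Clim_mult; [apply Clim_mult|];
      auto using Clim_const, Gamma_seq_Clim, Clim_INR_div_add_INR.
Qed.

Lemma CGamma_add_nat w k : not_nonpos_int w -> CGamma (w + RtoC (INR k)) = (poch w k * CGamma w)%C.
Proof.
  intros Hw. induction k as [|k IH].
  - replace (w + RtoC (INR 0))%C with w by (apply injective_projections; simpl; ring).
    simpl. ring.
  - replace (w + RtoC (INR (S k)))%C with (w + RtoC (INR k) + 1)%C
      by (rewrite S_INR, RtoC_plus; ring).
    rewrite CGamma_add_1, IH by auto using not_nonpos_int_add_nat. simpl. ring.
Qed.

(** * Hypergeometric series and the series f *)

Definition hypergeo_term (as_ bs : list C) (x : C) (k : nat) : C :=
  (Cprod (map (fun a => poch a k) as_) / Cprod (map (fun b => poch b k) bs)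
   * x ^ k / RtoC (INR (fact k)))%C.

Lemma hypergeo_term_0 as_ bs x : hypergeo_term as_ bs x 0 = 1%C.
Proof.
  assert (Hprod : forall l : list C, Cprod (map (fun a => poch a 0) l) = 1%C).
  { induction l as [|a l IH]; simpl in *; [auto | rewrite IH; ring]. }
  unfold hypergeo_term. rewrite !Hprod. simpl. field.
Qed.

Lemma Cmod_hypergeo_term_2_2_le a1 a2 b1 b2 B1 B2 x :
  not_nonpos_int b1 -> not_nonpos_int b2 -> 0 <= B1 -> 0 <= B2 ->
  shift_ratio_le a1 b1 B1 -> shift_ratio_le a2 b2 B2 ->
  forall k, Cmod (hypergeo_term [a1; a2] [b1; b2] x k) <= (B1 * B2 * Cmod x) ^ k.
Proof.
  intros Hb1 Hb2 HB1 HB2 H1 H2 k.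
  pose proof (Cmod_poch_le _ _ _ HB1 H1 k) as P1.
  pose proof (Cmod_poch_le _ _ _ HB2 H2 k) as P2.
  pose proof (proj1 (Cmod_gt_0 _) (poch_neq_0 b1 k Hb1)) as Q1.
  pose proof (proj1 (Cmod_gt_0 _) (poch_neq_0 b2 k Hb2)) as Q2.
  pose proof (INR_fact_lt_0 k) as F.
  assert (F1 : 1 <= INR (fact k)) by apply (le_INR 1), lt_O_fact.
  pose proof (Cmod_ge_0 (poch a1 k)). pose proof (Cmod_ge_0 (poch a2 k)).
  unfold hypergeo_term, Cprod; simpl. rewrite !Cmult_1_r.
  rewrite Cmod_div, Cmod_R, Rabs_pos_eq by (lra || apply RtoC_INR_fact_neq_0).
  apply Rle_div_l; [lra|].
  rewrite Cmod_mult, Cmod_pow, Cmod_div, !Cmod_mult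
    by (apply Cmult_neq_0; apply poch_neq_0; auto).
  rewrite !Rpow_mult_distr. pose proof (pow_le (Cmod x) k (Cmod_ge_0 x)).
  assert (Hratio : Cmod (poch a1 k) * Cmod (poch a2 k) / (Cmod (poch b1 k) * Cmod (poch b2 k))
                   <= B1 ^ k * B2 ^ k).
  { apply Rle_div_l; [nra|].
    replace (B1 ^ k * B2 ^ k * (Cmod (poch b1 k) * Cmod (poch b2 k)))
      with ((B1 ^ k * Cmod (poch b1 k)) * (B2 ^ k * Cmod (poch b2 k))) by ring.
    apply Rmult_le_compat; auto. }
  apply Rle_trans with (B1 ^ k * B2 ^ k * Cmod x ^ k).
  - apply Rmult_le_compat_r; auto.
  - rewrite <- (Rmult_1_r (B1 ^ k * B2 ^ k * Cmod x ^ k)) at 1.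
    apply Rmult_le_compat_l; auto. apply Rmult_le_pos; auto.
    apply Rmult_le_pos; apply pow_le; auto.
Qed.

Definition f_weight (al be ga z : C) (nu : nat) : C :=
  ((/ z) ^ nu * poch (al + ga) nu / (RtoC (INR (fact nu)) * poch (be + 1) nu))%C.

Definition f_lead (al be ga de : C) : C :=
  (CGamma (al + 1) * CGamma (al + ga) / (CGamma (be + 1) * CGamma de))%C.

Definition f_hypergeo (al be de z : C) (nu : nat) : C :=
  hypergeo [(al + 1)%C; (be + RtoC (INR nu))%C] [de; (be + 1 + RtoC (INR nu))%C] (- / z).

Lemma Cinv_0 : (/ 0 = 0)%C.
Proof. apply injective_projections; simpl; unfold Rdiv; rewrite Rmult_0_l; lra. Qed.

(* If [CGamma be] or [CGamma de] vanishes, both sides are [0] since [/ 0 = 0]. *)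
Lemma f_term_eq al be ga de z nu :
  not_nonpos_int (al + ga) -> not_nonpos_int be ->
  f_term al be ga de z nu
  = (f_weight al be ga z nu * f_lead al be ga de * f_hypergeo al be de z nu)%C.
Proof.
  intros Halga Hbe. pose proof (not_nonpos_int_add_1 be Hbe) as Hbe1.
  unfold f_term, f_weight, f_lead, f_hypergeo, MacRobertE, Cprod; simpl.
  rewrite (CGamma_add_nat (al + ga) nu), (CGamma_add_nat be nu), (CGamma_add_nat (be + 1) nu),
    (CGamma_add_1 be) by auto.
  destruct (Ceq_dec (CGamma be) 0) as [->|G0];
    [unfold Cdiv; repeat progress rewrite ?Cmult_0_l, ?Cmult_0_r, ?Cinv_0; reflexivity|].
  destruct (Ceq_dec (CGamma de) 0) as [->|D0];
    [unfold Cdiv; repeat progress rewrite ?Cmult_0_l, ?Cmult_0_r, ?Cinv_0; reflexivity|].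
  field. repeat split; auto using poch_neq_0, RtoC_INR_fact_neq_0, not_nonpos_int_neq_0.
Qed.

Section Asymptotics.

Variables al be ga de : C.
Hypothesis Halga : not_nonpos_int (al + ga).
Hypothesis Hbe : not_nonpos_int be.
Hypothesis Hde : not_nonpos_int de.

Variables B1 B2 B3 : R.
Hypotheses (HB1 : 1 <= B1) (HB2 : 1 <= B2) (HB3 : 1 <= B3).
Hypothesis R1 : shift_ratio_le (al + 1) de B1.
Hypothesis R2 : shift_ratio_le be (be + 1) B2.
Hypothesis R3 : shift_ratio_le (al + ga) (be + 1) B3.

Variable z : C.
Hypothesis Hz12 : 2 * (B1 * B2) <= Cmod z.
Hypothesis Hz3 : 2 * B3 <= Cmod z.

Lemma Cmod_z_gt_0 : 0 < Cmod z.
Proof. nra. Qed.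

Lemma z_neq_0 : z <> 0%C.
Proof. intros E. pose proof Cmod_z_gt_0 as H. rewrite E, Cmod_0 in H. lra. Qed.

Lemma f_hypergeo_sub_1_bound nu : Cmod (f_hypergeo al be de z nu - 1) <= 4 * (B1 * B2 / Cmod z).
Proof.
  pose proof Cmod_z_gt_0. pose proof z_neq_0.
  assert (Hq : 0 <= B1 * B2 / Cmod z <= 1/2).
  { split; [apply Rdiv_le_0_compat; nra | apply Rle_div_l; nra]. }
  destruct (CSeries_geom_tail_bound
              (hypergeo_term [al + 1; be + RtoC (INR nu)] [de; be + 1 + RtoC (INR nu)] (- / z))%C
              1 (B1 * B2 / Cmod z)) as [_ Hbound]; [lra | auto | |].
  - intros n. rewrite Rmult_1_l.
    replace (B1 * B2 / Cmod z) with (B1 * B2 * Cmod (- / z)%C)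
      by (rewrite Cmod_opp, Cmod_inv by auto; reflexivity).
    apply Cmod_hypergeo_term_2_2_le; try lra; auto using shift_ratio_le_shift.
    apply not_nonpos_int_add_nat, not_nonpos_int_add_1, Hbe.
  - rewrite hypergeo_term_0, Rmult_1_r in Hbound. exact Hbound.
Qed.

Lemma Cmod_f_hypergeo_le nu : Cmod (f_hypergeo al be de z nu) <= 3.
Proof.
  pose proof (f_hypergeo_sub_1_bound nu).
  assert (B1 * B2 / Cmod z <= 1/2) by (apply Rle_div_l; [apply Cmod_z_gt_0 | lra]).
  pose proof (Cmod_triangle (f_hypergeo al be de z nu - 1) 1) as Ht.
  rewrite Cmod_1 in Ht.
  replace (f_hypergeo al be de z nu - 1 + 1)%C with (f_hypergeo al be de z nu) in Ht by ring.
  lra.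
Qed.

Lemma Cmod_f_weight_le nu : Cmod (f_weight al be ga z nu) <= (B3 / Cmod z) ^ nu.
Proof.
  pose proof (not_nonpos_int_add_1 be Hbe) as Hbe1.
  pose proof (Cmod_poch_le _ _ B3 ltac:(lra) R3 nu) as P.
  pose proof (proj1 (Cmod_gt_0 _) (poch_neq_0 _ nu Hbe1)).
  assert (1 <= INR (fact nu)) by apply (le_INR 1), lt_O_fact.
  pose proof Cmod_z_gt_0. pose proof z_neq_0.
  unfold f_weight.
  rewrite Cmod_div, !Cmod_mult, Cmod_pow, Cmod_inv, Cmod_R, Rabs_pos_eq
    by (lra || auto || apply Cmult_neq_0; auto using RtoC_INR_fact_neq_0, poch_neq_0).
  unfold Rdiv. rewrite Rpow_mult_distr, pow_inv.
  apply Rle_div_l; [nra|].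
  pose proof (pow_lt (Cmod z) nu ltac:(lra)).
  pose proof (pow_le B3 nu ltac:(lra)). pose proof (Cmod_ge_0 (poch (al + ga) nu)).
  assert (0 < / Cmod z ^ nu) by (apply Rinv_0_lt_compat; lra).
  replace (B3 ^ nu * / Cmod z ^ nu * (INR (fact nu) * Cmod (poch (be + 1) nu)))
    with (/ Cmod z ^ nu * (B3 ^ nu * Cmod (poch (be + 1) nu) * INR (fact nu))) by ring.
  apply Rmult_le_compat_l; [lra|]. nra.
Qed.

Lemma Cmod_f_term_le nu :
  Cmod (f_term al be ga de z nu) <= 3 * Cmod (f_lead al be ga de) * (B3 / Cmod z) ^ nu.
Proof.
  rewrite f_term_eq, !Cmod_mult by auto.
  pose proof (Cmod_f_weight_le nu). pose proof (Cmod_f_hypergeo_le nu).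
  pose proof (Cmod_ge_0 (f_weight al be ga z nu)). pose proof (Cmod_ge_0 (f_lead al be ga de)).
  replace (3 * Cmod (f_lead al be ga de) * (B3 / Cmod z) ^ nu)
    with ((B3 / Cmod z) ^ nu * Cmod (f_lead al be ga de) * 3) by ring.
  apply Rmult_le_compat; [apply Rmult_le_pos; auto | apply Cmod_ge_0 | |auto].
  apply Rmult_le_compat_r; auto.
Qed.

Lemma f_fun_sub_lead_bound :
  ex_series (f_term al be ga de z) /\
  Cmod (f_fun al be ga de z - f_lead al be ga de)
  <= (4 * Cmod (f_lead al be ga de) * (B1 * B2) + 12 * Cmod (f_lead al be ga de) * B3) / Cmod z.
Proof.
  pose proof Cmod_z_gt_0. pose proof (Cmod_ge_0 (f_lead al be ga de)) as HL.
  set (L := Cmod (f_lead al be ga de)) in *.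
  assert (Hq : 0 <= B3 / Cmod z <= 1/2) by (split; [apply Rdiv_le_0_compat | apply Rle_div_l]; lra).
  destruct (CSeries_geom_tail_bound (f_term al be ga de z) (3 * L) (B3 / Cmod z))
    as [Hex Htail]; [lra | auto | intros n; apply Cmod_f_term_le |].
  split; auto.
  assert (Hterm0 : (f_term al be ga de z 0 - f_lead al be ga de)%C
                   = (f_lead al be ga de * (f_hypergeo al be de z 0 - 1))%C).
  { rewrite f_term_eq by auto. unfold f_weight. simpl. field. }
  replace (f_fun al be ga de z - f_lead al be ga de)%C
    with ((CSeries (f_term al be ga de z) - f_term al be ga de z 0)
          + (f_term al be ga de z 0 - f_lead al be ga de))%C by (unfold f_fun; ring).
  eapply Rle_trans; [apply Cmod_triangle|]. rewrite Hterm0, Cmod_mult. fold L.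
  pose proof (Rmult_le_compat_l _ _ _ HL (f_hypergeo_sub_1_bound 0)).
  replace ((4 * L * (B1 * B2) + 12 * L * B3) / Cmod z)
    with (4 * (3 * L) * (B3 / Cmod z) + L * (4 * (B1 * B2 / Cmod z))) by (field; lra).
  lra.
Qed.

End Asymptotics.

Theorem mainTheorem4 (al be ga de : C)
  (Hal : not_nonpos_int (al + 1)%C)
  (Halga : not_nonpos_int (al + ga)%C)
  (Hbe : not_nonpos_int be)
  (Hde : not_nonpos_int de) :
  exists (K R0 : R), (0 < R0)%R /\
    forall z : C, (R0 < Cmod z)%R ->
      ex_series (f_term al be ga de z) /\
      (Cmod (f_fun al be ga de z
              - CGamma (al + 1) * CGamma (al + ga)
                / (CGamma (be + 1) * CGamma de)) <= K / Cmod z)%R.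
Proof.
  pose proof (not_nonpos_int_add_1 be Hbe) as Hbe1.
  destruct (shift_ratio_le_exists (al + 1) de Hde) as [B1 [HB1 R1]].
  destruct (shift_ratio_le_exists be (be + 1) Hbe1) as [B2 [HB2 R2]].
  destruct (shift_ratio_le_exists (al + ga) (be + 1) Hbe1) as [B3 [HB3 R3]].
  set (L := Cmod (f_lead al be ga de)).
  exists (4 * L * (B1 * B2) + 12 * L * B3), (2 * (B1 * B2 + B3)).
  split; [nra|]. intros z Hz.
  apply (f_fun_sub_lead_bound al be ga de); auto; nra.
Qed.
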